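(* The following identities hold: \begin{align*}\sum_{k=1}^\infty\frac{77k^2-53k+10}{k(3k-1)(3k-2)(-2)^k\binom{4k}k}&=-3\log2, \\\sum_{k=1}^\infty\frac{415k^2-343k+62}{k(3k-1)(3k-2)(-8)^k\binom{4k}k}&=-3\log2, \\\sum_{k=1}^\infty\frac{187k^2-131k+22}{k(3k-1)(3k-2)(-24)^k\binom{4k}k}&=\log\frac23, \\\sum_{k=1}^\infty\frac{1261k^2-989k+170}{k(3k-1)(3k-2)(-192)^k\binom{4k}k}&=\log\frac34. \end{align*} *)

From Stdlib Require Import Reals.
From Coquelicot Require Import Coquelicot.
Open Scope R_scope.

Definition summand (a b c m : R) (k : nat) : R :=
  let x := INR k in
  (a * x ^ 2 + b * x + c) /
  (x * (3 * x - 1) * (3 * x - 2) * m ^ k * Binomial.C (4 * k) k).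

From Stdlib Require Import Reals Lra Lia Factorial.
From Coquelicot Require Import Coquelicot.
Open Scope R_scope.

(* With k = n + 1, 1 / (k (3k-1) (3k-2) binom(4k,k)) = 3k n! (3n)! / (4n+4)!, and
   by the Beta integral int_0^1 t^n (1-t)^(3n) p(t) dt is a cubic in n times
   n! (3n)! / (4n+4)! for every cubic p.  Matching that cubic with the numerator
   writes the k-th summand as int_0^1 (t(1-t)^3/m)^n A p(t)/m dt.  Since
   t(1-t)^3 <= 1 < |m| on [0,1], the geometric series can be summed under the
   integral, giving int_0^1 A p(t) / (m - t(1-t)^3) dt.  In each of the four
   cases m = r(1-r)^3 for an integer r outside [0,1], and p is the cofactor of
   t - r in m - t(1-t)^3, so the integrand is A/(t - r) and the sum is
   A ln((r-1)/r). *)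

Lemma is_RInt_of_derive (F f : R -> R) (a b v : R) :
  F b - F a = v ->
  (forall x, Rmin a b <= x <= Rmax a b -> is_derive F x (f x)) ->
  (forall x, Rmin a b <= x <= Rmax a b -> ex_derive f x) ->
  is_RInt f a b v.
Proof.
  intros <- HF Hf. apply (is_RInt_derive F f); [exact HF |].
  intros x Hx. apply (@ex_derive_continuous R_AbsRing R_NormedModule), Hf, Hx.
Qed.

Lemma is_RInt_congr (f g : R -> R) (a b v w : R) :
  is_RInt f a b v -> (forall x, f x = g x) -> v = w -> is_RInt g a b w.
Proof. intros Hf Hfg <-. exact (is_RInt_ext f g a b v (fun x _ => Hfg x) Hf). Qed.

(* [auto_derive] leaves [INR (S n)] in this unfolded form. *)
Lemma INR_S_unfolded n : match n with O => 1 | S _ => INR n + 1 end = INR n + 1.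
Proof. destruct n; simpl; ring. Qed.

Lemma fact_S_INR n : INR (fact (S n)) = (INR n + 1) * INR (fact n).
Proof. rewrite fact_simpl, mult_INR, S_INR. ring. Qed.

Lemma is_RInt_beta_parts a b :
  is_RInt (fun t => (INR a + 1) * (t ^ a * (1 - t) ^ S b)
                    - (INR b + 1) * (t ^ S a * (1 - t) ^ b)) 0 1 0.
Proof.
  apply (is_RInt_of_derive (fun t => t ^ S a * (1 - t) ^ S b)).
  - simpl. ring.
  - intros x _. auto_derive; [auto |].
    rewrite !INR_S_unfolded. cbn [pow]. change (1 + - x) with (1 - x). ring.
  - intros x _. auto_derive. auto.
Qed.

Lemma is_RInt_beta b : forall a,
  is_RInt (fun t => t ^ a * (1 - t) ^ b) 0 1
    (INR (fact a) * INR (fact b) / INR (fact (a + b + 1))).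
Proof.
  induction b as [|b IH]; intros a; pose proof (pos_INR a); pose proof (INR_fact_lt_0 a).
  - apply (is_RInt_congr _ _ _ _ _ _ (is_RInt_pow 0 1 a)); [intros t; simpl; ring |].
    replace (a + 0 + 1)%nat with (S a) by lia.
    rewrite fact_S_INR, S_INR, pow1, pow_i by lia. simpl. field. lra.
  - pose proof (pos_INR b); pose proof (INR_fact_lt_0 (a + b + 1)).
    apply (is_RInt_congr _ _ _ _ _ _
             (is_RInt_scal _ 0 1 (/ (INR a + 1)) _
                (is_RInt_plus _ _ 0 1 _ _ (is_RInt_beta_parts a b)
                   (is_RInt_scal _ 0 1 (INR b + 1) _ (IH (S a)))))).
    + intros t. unfold scal, plus; simpl; unfold mult, plus; simpl. field. lra.
    + replace (S a + b + 1)%nat with (S (a + b + 1)) by lia.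
      replace (a + S b + 1)%nat with (S (a + b + 1)) by lia.
      rewrite !fact_S_INR. pose proof (pos_INR (a + b + 1)).
      unfold scal, plus; simpl; unfold mult, plus; simpl. field. lra.
Qed.

Definition bern3 (b0 b1 b2 b3 t : R) : R :=
  b0 * (1 - t) ^ 3 + b1 * (t * (1 - t) ^ 2) + b2 * (t ^ 2 * (1 - t)) + b3 * t ^ 3.

Definition bern3_moment (b0 b1 b2 b3 x : R) : R :=
  b0 * ((3 * x + 3) * (3 * x + 2) * (3 * x + 1)) + b1 * ((x + 1) * (3 * x + 2) * (3 * x + 1))
  + b2 * ((x + 1) * (x + 2) * (3 * x + 1)) + b3 * ((x + 1) * (x + 2) * (x + 3)).

Lemma is_RInt_bern3_moment b0 b1 b2 b3 n :
  is_RInt (fun t => t ^ n * (1 - t) ^ (3 * n) * bern3 b0 b1 b2 b3 t) 0 1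
    (bern3_moment b0 b1 b2 b3 (INR n) * INR (fact n) * INR (fact (3 * n))
     / INR (fact (4 * n + 4))).
Proof.
  assert (Hbeta : forall i j, (i + j = 3)%nat ->
    is_RInt (fun t => t ^ (n + i) * (1 - t) ^ (3 * n + j)) 0 1
      (INR (fact (n + i)) * INR (fact (3 * n + j)) / INR (fact (4 * n + 4)))).
  { intros i j Hij. replace (4 * n + 4)%nat with (n + i + (3 * n + j) + 1)%nat by lia.
    apply is_RInt_beta. }
  pose proof (is_RInt_plus _ _ 0 1 _ _
    (is_RInt_plus _ _ 0 1 _ _
      (is_RInt_plus _ _ 0 1 _ _
        (is_RInt_scal _ 0 1 b0 _ (Hbeta 0%nat 3%nat eq_refl))
        (is_RInt_scal _ 0 1 b1 _ (Hbeta 1%nat 2%nat eq_refl)))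
      (is_RInt_scal _ 0 1 b2 _ (Hbeta 2%nat 1%nat eq_refl)))
    (is_RInt_scal _ 0 1 b3 _ (Hbeta 3%nat 0%nat eq_refl))) as Hsum.
  apply (is_RInt_congr _ _ _ _ _ _ Hsum).
  - intros t. unfold scal, plus; simpl; unfold mult, plus; simpl.
    rewrite !pow_add. unfold bern3. ring.
  - replace (n + 0)%nat with n by lia.
    replace (n + 3)%nat with (S (S (S n))) by lia.
    replace (n + 2)%nat with (S (S n)) by lia.
    replace (n + 1)%nat with (S n) by lia.
    replace (3 * n + 3)%nat with (S (S (S (3 * n)))) by lia.
    replace (3 * n + 2)%nat with (S (S (3 * n))) by lia.
    replace (3 * n + 1)%nat with (S (3 * n)) by lia.
    replace (3 * n + 0)%nat with (3 * n)%nat by lia.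
    rewrite !fact_S_INR, !S_INR, mult_INR.
    unfold scal, plus; simpl; unfold mult, plus; simpl.
    unfold bern3_moment. field. apply INR_fact_neq_0.
Qed.

Lemma summand_S a b c m n : m <> 0 ->
  summand a b c m (S n) =
  (a * (INR n + 1) ^ 2 + b * (INR n + 1) + c) * (3 * INR n + 3)
  * INR (fact n) * INR (fact (3 * n)) / (m ^ S n * INR (fact (4 * n + 4))).
Proof.
  intros Hm. unfold summand, Binomial.C.
  replace (4 * S n - S n)%nat with (S (S (S (3 * n)))) by lia.
  replace (4 * S n)%nat with (4 * n + 4)%nat by lia.
  rewrite !fact_S_INR, !S_INR, mult_INR.
  pose proof (pos_INR n). pose proof (pow_nonzero m (S n) Hm).
  simpl INR. field. repeat split; try apply INR_fact_neq_0; lra.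
Qed.

Lemma is_RInt_summand a b c m A b0 b1 b2 b3 n : m <> 0 ->
  (forall x, A * bern3_moment b0 b1 b2 b3 x
             = (a * (x + 1) ^ 2 + b * (x + 1) + c) * (3 * x + 3)) ->
  is_RInt (fun t => (t * (1 - t) ^ 3 / m) ^ n * (A * bern3 b0 b1 b2 b3 t / m)) 0 1
    (summand a b c m (S n)).
Proof.
  intros Hm Hmoment. pose proof (pow_nonzero m n Hm).
  apply (is_RInt_congr _ _ _ _ _ _
           (is_RInt_scal _ 0 1 (A / m ^ S n) _ (is_RInt_bern3_moment b0 b1 b2 b3 n))).
  - intros t. unfold Rdiv. rewrite pow_mult, !Rpow_mult_distr, pow_inv.
    unfold scal; simpl; unfold mult; simpl. field. auto.
  - rewrite summand_S, <- Hmoment by exact Hm.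
    unfold scal; simpl; unfold mult; simpl.
    field. repeat split; auto. apply INR_fact_neq_0.
Qed.

Lemma is_lim_seq_of_Rabs_le_geom (u : nat -> R) (l C rho : R) :
  0 <= rho < 1 -> (forall n, Rabs (u n - l) <= C * rho ^ n) -> is_lim_seq u l.
Proof.
  intros Hrho Hu.
  assert (Hgeom : is_lim_seq (fun n => C * rho ^ n) 0).
  { replace (Finite 0) with (Finite (C * 0)) by (f_equal; ring).
    apply (is_lim_seq_scal_l _ C 0), is_lim_seq_geom. rewrite Rabs_right; lra. }
  apply (is_lim_seq_le_le (fun n => l - C * rho ^ n) u (fun n => l + C * rho ^ n)).
  - intros n. apply Rabs_le_between', Hu.
  - replace (Finite l) with (Finite (l - 0)) by (f_equal; ring).
    apply is_lim_seq_minus'; [apply is_lim_seq_const | exact Hgeom].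
  - replace (Finite l) with (Finite (l + 0)) by (f_equal; ring).
    apply is_lim_seq_plus'; [apply is_lim_seq_const | exact Hgeom].
Qed.

Lemma Rabs_geom_tail_le x y rho M k :
  Rabs x <= rho -> rho < 1 -> Rabs y <= M ->
  Rabs (x ^ k * y / (1 - x)) <= rho ^ k * M / (1 - rho).
Proof.
  intros Hx Hrho Hy.
  assert (Hx1 : 0 < 1 - rho <= 1 - x) by (pose proof (Rle_abs x); lra).
  unfold Rdiv. rewrite !Rabs_mult, Rabs_inv, <- RPow_abs, (Rabs_right (1 - x)) by lra.
  apply Rmult_le_compat.
  - apply Rmult_le_pos; [apply pow_le | ]; apply Rabs_pos.
  - left. apply Rinv_0_lt_compat. lra.
  - apply Rmult_le_compat; try apply Rabs_pos; [apply pow_le, Rabs_pos | | exact Hy].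
    apply pow_incr. split; [apply Rabs_pos | exact Hx].
  - apply Rinv_le_contravar; lra.
Qed.

Section GeometricSeriesUnderIntegral.

Variables (q h : R -> R) (a b rho M : R) (s : nat -> R).
Hypothesis Hab : a <= b.
Hypothesis Hrho : rho < 1.
Hypothesis Hq : forall t, a <= t <= b -> Rabs (q t) <= rho.
Hypothesis Hh : forall t, a <= t <= b -> Rabs (h t) <= M.
Hypothesis Hs : forall n, is_RInt (fun t => q t ^ n * h t) a b (s n).

Lemma is_RInt_sum_n_geom N :
  is_RInt (fun t => h t * (1 - q t ^ S N) / (1 - q t)) a b (sum_n s N).
Proof.
  assert (Hq1 : forall t, Rmin a b < t < Rmax a b -> 1 - q t <> 0).
  { rewrite Rmin_left, Rmax_right by exact Hab.
    intros t Ht. pose proof (Rle_abs (q t)). pose proof (Hq t ltac:(lra)). lra. }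
  induction N as [|N IH].
  - rewrite sum_O. refine (is_RInt_ext _ _ _ _ _ _ (Hs 0)). intros t Ht.
    specialize (Hq1 t Ht). simpl. field. exact Hq1.
  - rewrite sum_Sn.
    refine (is_RInt_ext _ _ _ _ _ _ (is_RInt_plus _ _ _ _ _ _ IH (Hs (S N)))). intros t Ht.
    specialize (Hq1 t Ht). unfold plus; simpl. field. exact Hq1.
Qed.

Variable L : R.
Hypothesis HL : is_RInt (fun t => h t / (1 - q t)) a b L.

Lemma Rabs_sum_n_RInt_geom_le N :
  Rabs (sum_n s N - L) <= (b - a) * (rho ^ S N * M / (1 - rho)).
Proof.
  assert (Htail : is_RInt (fun t => q t ^ S N * h t / (1 - q t)) a b (L - sum_n s N)).
  { apply (is_RInt_congr _ _ _ _ _ _ (is_RInt_minus _ _ _ _ _ _ HL (is_RInt_sum_n_geom N))).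
    - intros t. unfold minus, plus, opp; simpl. unfold Rdiv. ring.
    - reflexivity. }
  rewrite Rabs_minus_sym.
  refine (norm_RInt_le_const _ _ _ _ _ Hab _ Htail).
  intros t Ht. apply Rabs_geom_tail_le; auto.
Qed.

Lemma is_series_RInt_geom : is_series s L.
Proof.
  assert (Hrho0 : 0 <= rho).
  { pose proof (Hq a (conj (Rle_refl a) Hab)). pose proof (Rabs_pos (q a)). lra. }
  apply (is_lim_seq_of_Rabs_le_geom _ _ ((b - a) * (rho * M / (1 - rho))) rho); [lra |].
  intros n.
  replace ((b - a) * (rho * M / (1 - rho)) * rho ^ n)
    with ((b - a) * (rho ^ S n * M / (1 - rho))) by (simpl; field; lra).
  apply Rabs_sum_n_RInt_geom_le.
Qed.

End GeometricSeriesUnderIntegral.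

Lemma is_RInt_inv_sub r : r < 0 \/ 1 < r ->
  is_RInt (fun t => / (t - r)) 0 1 (ln ((r - 1) / r)).
Proof.
  intros Hr.
  assert (Hr0 : r <> 0) by lra.
  assert (Hin : forall x, Rmin 0 1 <= x <= Rmax 0 1 -> x - r <> 0 /\ 0 < (r - x) / r).
  { rewrite Rmin_left, Rmax_right by lra. intros x Hx. split; [lra |].
    destruct Hr as [Hr | Hr].
    - replace ((r - x) / r) with ((x - r) / - r) by (field; exact Hr0).
      apply Rdiv_lt_0_compat; lra.
    - apply Rdiv_lt_0_compat; lra. }
  apply (is_RInt_of_derive (fun t => ln ((r - t) / r))).
  - replace ((r - 0) / r) with 1 by (field; exact Hr0). rewrite ln_1. ring.
  - intros x Hx. destruct (Hin x Hx) as [Hxr Hpos].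
    auto_derive; [exact Hpos |]. field.
    repeat split; [exact Hxr | exact Hr0 | contradict Hxr; lra].
  - intros x Hx. destruct (Hin x Hx) as [Hxr _]. auto_derive. exact Hxr.
Qed.

Lemma mul_pow_one_sub_bounds t j : 0 <= t <= 1 -> 0 <= t * (1 - t) ^ j <= 1.
Proof.
  intros Ht.
  assert (Hj : 0 <= (1 - t) ^ j <= 1).
  { split; [apply pow_le; lra |].
    rewrite <- (pow1 j) at 2. apply pow_incr. lra. }
  nra.
Qed.

Lemma is_series_summand_ln a b c m A r b0 b1 b2 b3 :
  1 < Rabs m -> r < 0 \/ 1 < r ->
  (forall t, m - t * (1 - t) ^ 3 = (t - r) * bern3 b0 b1 b2 b3 t) ->
  (forall x, A * bern3_moment b0 b1 b2 b3 x
             = (a * (x + 1) ^ 2 + b * (x + 1) + c) * (3 * x + 3)) ->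
  is_series (fun n => summand a b c m (S n)) (A * ln ((r - 1) / r)).
Proof.
  intros Hm Hr Hfactor Hmoment.
  assert (Hm0 : m <> 0) by (intros E; rewrite E, Rabs_R0 in Hm; lra).
  assert (Hq : forall t, 0 <= t <= 1 -> Rabs (t * (1 - t) ^ 3 / m) <= / Rabs m).
  { intros t Ht. pose proof (mul_pow_one_sub_bounds t 3 Ht).
    unfold Rdiv. rewrite Rabs_mult, Rabs_inv, (Rabs_right (t * (1 - t) ^ 3)) by lra.
    pose proof (Rinv_0_lt_compat (Rabs m) ltac:(lra)). nra. }
  set (h := fun t => A * bern3 b0 b1 b2 b3 t / m).
  destruct (bounded_continuity h 0 1) as [M HM].
  { intros t _. apply (@ex_derive_continuous R_AbsRing R_NormedModule).
    unfold h, bern3. auto_derive. exact I. }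
  apply (is_series_RInt_geom (fun t => t * (1 - t) ^ 3 / m) h 0 1 (/ Rabs m) M).
  - lra.
  - rewrite <- Rinv_1. apply Rinv_lt_contravar; lra.
  - exact Hq.
  - intros t Ht. left. exact (HM t Ht).
  - intros n. apply is_RInt_summand; assumption.
  - refine (is_RInt_ext _ _ _ _ _ _ (is_RInt_scal _ 0 1 A _ (is_RInt_inv_sub r Hr))).
    rewrite Rmin_left, Rmax_right by lra. intros t Ht.
    pose proof (mul_pow_one_sub_bounds t 3 ltac:(lra)).
    assert (Hden : m - t * (1 - t) ^ 3 <> 0).
    { intros E. replace m with (t * (1 - t) ^ 3) in Hm by lra.
      rewrite Rabs_right in Hm; lra. }
    rewrite Hfactor in Hden. destruct (Rmult_neq_0_reg _ _ Hden) as [Htr Hbern].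
    replace (1 - t * (1 - t) ^ 3 / m) with ((m - t * (1 - t) ^ 3) / m) by (field; exact Hm0).
    rewrite Hfactor. unfold h, scal; simpl; unfold mult; simpl. field. tauto.
Qed.

Local Ltac summand_ln_hyps :=
  first [ rewrite Rabs_left by lra; lra | lra | intros ?; unfold bern3, bern3_moment; ring ].

Theorem theorem1p2 :
  is_series (fun n => summand 77 (-53) 10 (-2) (S n)) (- 3 * ln 2) /\
  is_series (fun n => summand 415 (-343) 62 (-8) (S n)) (- 3 * ln 2) /\
  is_series (fun n => summand 187 (-131) 22 (-24) (S n)) (ln (2 / 3)) /\
  is_series (fun n => summand 1261 (-989) 170 (-192) (S n)) (ln (3 / 4)).
Proof.
  repeat split.
  - replace (- 3 * ln 2) with (3 * ln ((2 - 1) / 2))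
      by (replace ((2 - 1) / 2) with (/ 2) by field; rewrite ln_Rinv by lra; ring).
    apply (is_series_summand_ln _ _ _ _ 3 2 1 4 4 2); summand_ln_hyps.
  - replace (- 3 * ln 2) with (-3 * ln ((-1 - 1) / -1))
      by (replace ((-1 - 1) / -1) with 2 by field; ring).
    apply (is_series_summand_ln _ _ _ _ (-3) (-1) (-8) (-17) (-14) (-4)); summand_ln_hyps.
  - replace (ln (2 / 3)) with (1 * ln ((3 - 1) / 3))
      by (replace ((3 - 1) / 3) with (2 / 3) by field; ring).
    apply (is_series_summand_ln _ _ _ _ 1 3 8 27 30 12); summand_ln_hyps.
  - replace (ln (3 / 4)) with (-1 * ln ((-3 - 1) / -3))
      by (replace ((-3 - 1) / -3) with (/ (3 / 4)) by field; rewrite ln_Rinv by lra; ring).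
    apply (is_series_summand_ln _ _ _ _ (-1) (-3) (-64) (-171) (-156) (-48)); summand_ln_hyps.
Qed.
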